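(* Let $\mathbf C$ be an admissible category of lattices. The adjunction $\mathbb P\dashv\mathrm{pt}$ between $\mathbf{Conv}$ and $(\mathbf C^{\mathrm{conv}})^{op}$ restricts to an adjunction between the category $\mathbf{Lim}$ of limit spaces and $(\mathbf C^{\mathrm{lim}})^{op}$, and also to an adjunction between $\mathbf{Lim}$ and $(\mathbf C^{\mathrm{lim}}_{\mathrm{cl}})^{op}$.
   Context: Setting: a filter on an inf-semilattice $L$ is a non-empty upward-closed subset closed under binary meets ($L$ allowed); $\mathbb F L$ is the set of filters. A category of lattices has lattices as objects and lattice morphisms; it is admissible if every powerset $\mathbb P(X)$ is an object and there are classes of index sets $\mathcal I,\mathcal J$ with morphisms exactly the monotone maps preserving existing $I$-indexed infima ($I\in\mathcal I$) and $J$-indexed suprema ($J\in\mathcal J$). A convergence $\mathbf C$-object is $(L,\lim_L)$ with $\lim_L:\mathbb F L\to L$ monotone; $\mathbf C^{\mathrm{conv}}$-morphisms are $\mathbf C$-morphisms $\varphi:L\to L'$ with $\lim_{L'}\mathcal F\le\varphi(\lim_L\varphi^{-1}(\mathcal F))$. Convergence spaces and $\mathbf{Conv}$: a set $X$ with relation $\to$ between filters of subsets and points, with $\{S:x\in S\}\to x$ and upward monotonicity in the filter; continuous maps preserve convergence via image filters. $\mathbb P(X)$ has $\lim\mathcal F=\{x:\mathcal F\to x\}$, $\mathbb P(f)=f^{-1}$. $\mathrm{pt}\,L$ is the set of $\mathbf C^{\mathrm{conv}}$-morphisms $L\to\{\emptyset,\{*\}\}$ (the latter with constant limit $\{*\}$),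 with $\ell^\bullet=\{\psi:\psi(\ell)=\{*\}\}$ and $\mathcal F\to\psi$ iff $\psi\in(\lim_L\{\ell:\ell^\bullet\in\mathcal F\})^\bullet$; $\mathrm{pt}\,\varphi(\psi)=\psi\circ\varphi$. It is known that $\mathbb P\dashv\mathrm{pt}$ is an adjunction between $\mathbf{Conv}$ and $(\mathbf C^{\mathrm{conv}})^{op}$. A limit space is a convergence space in which $\mathcal F\to x$ and $\mathcal G\to x$ imply $\mathcal F\cap\mathcal G\to x$; $\mathbf{Lim}$ is the full subcategory of $\mathbf{Conv}$ of limit spaces. A limit $\mathbf C$-object is a convergence $\mathbf C$-object with $\lim_L(\mathcal F\cap\mathcal G)=\lim_L\mathcal F\wedge\lim_L\mathcal G$ for all $\mathcal F,\mathcal G\in\mathbb F L$; $\mathbf C^{\mathrm{lim}}$ is the full subcategory of these. $\mathcal C_L$ is the set of complemented elements of $L$; a convergence $\mathbf C$-object is classical if for all filters $\mathcal F,\mathcal G$, $\mathcal F\cap\mathcal C_L=\mathcal G\cap\mathcal C_L$ implies $\lim_L\mathcal F=\lim_L\mathcal G$; $\mathbf C^{\mathrm{lim}}_{\mathrm{cl}}$ is the full subcategory of classical limit $\mathbf C$-objects. *)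

From HB Require Import structures.
From mathcomp Require Import all_boot all_order.
From mathcomp Require Import boolp classical_sets.
Set Implicit Arguments. Unset Strict Implicit. Unset Printing Implicit Defensive.
Import Order.LTheory.
Local Open Scope classical_set_scope.

(* filter on an inf-semilattice: nonempty, upward closed, closed under binary
   meets (the whole lattice is allowed) *)
Definition lat_filter d (L : latticeType d) (F : set L) : Prop :=
  (exists x, F x) /\
  (forall x y : L, F x -> (x <= y)%O -> F y) /\
  (forall x y : L, F x -> F y -> F (Order.meet x y)).

Definition is_inf d (L : latticeType d) (I : Type) (f : I -> L) (m : L) : Prop :=
  (forall i, (m <= f i)%O) /\ (forall z, (forall i, (z <= f i)%O) -> (z <= m)%O).

Definition is_sup d (L : latticeType d) (I : Type) (f : I -> L) (m : L) : Prop :=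
  (forall i, (f i <= m)%O) /\ (forall z, (forall i, (f i <= z)%O) -> (m <= z)%O).

(* morphisms of the category determined by the classes of index sets Icl, Jcl:
   monotone maps preserving all existing I-indexed infima (I in Icl) and all
   existing J-indexed suprema (J in Jcl) *)
Definition Cmor (Icl Jcl : Type -> Prop) d d' (L : tbLatticeType d)
    (L' : tbLatticeType d') (phi : L -> L') : Prop :=
  (forall x y : L, (x <= y)%O -> (phi x <= phi y)%O) /\
  (forall I : Type, Icl I -> forall (f : I -> L) (m : L),
      is_inf f m -> is_inf (fun i => phi (f i)) (phi m)) /\
  (forall J : Type, Jcl J -> forall (f : J -> L) (m : L),
      is_sup f m -> is_sup (fun j => phi (f j)) (phi m)).

Definition lattice_mor d d' (L : tbLatticeType d) (L' : tbLatticeType d')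
    (phi : L -> L') : Prop :=
  (forall x y, phi (Order.meet x y) = Order.meet (phi x) (phi y)) /\
  (forall x y, phi (Order.join x y) = Order.join (phi x) (phi y)) /\
  phi \top%O = \top%O /\ phi \bot%O = \bot%O.

(* An admissible category of lattices, given by its class of objects Obj and
   the classes of index sets Icl, Jcl: every powerset P(X) = set X (ordered by
   inclusion) is an object, and the morphisms (the maps satisfying Cmor
   between objects) are lattice morphisms. *)
Definition admissible (Obj : forall d, tbLatticeType d -> Prop)
    (Icl Jcl : Type -> Prop) : Prop :=
  (forall X : Type, Obj set_display (set X)) /\
  (forall d d' (L : tbLatticeType d) (L' : tbLatticeType d') (phi : L -> L'),
      Obj d L -> Obj d' L' -> Cmor Icl Jcl phi -> lattice_mor phi).

(* (L, lim) with lim : F L -> L monotone (lim is only ever evaluated on filters) *)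
Definition conv_obj (Obj : forall d, tbLatticeType d -> Prop) d
    (L : tbLatticeType d) (lim : set L -> L) : Prop :=
  Obj d L /\
  (forall F G : set L, lat_filter F -> lat_filter G -> F `<=` G ->
      (lim F <= lim G)%O).

Definition conv_mor (Icl Jcl : Type -> Prop) d d' (L : tbLatticeType d)
    (L' : tbLatticeType d') (lim : set L -> L) (lim' : set L' -> L')
    (phi : L -> L') : Prop :=
  Cmor Icl Jcl phi /\
  (forall F : set L', lat_filter F -> (lim' F <= phi (lim (phi @^-1` F)))%O).

Definition lim_obj (Obj : forall d, tbLatticeType d -> Prop) d
    (L : tbLatticeType d) (lim : set L -> L) : Prop :=
  conv_obj Obj lim /\
  (forall F G : set L, lat_filter F -> lat_filter G ->
      lim (F `&` G) = Order.meet (lim F) (lim G)).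

Definition complemented d (L : tbLatticeType d) : set L :=
  [set x | exists y : L, Order.meet x y = \bot%O /\ Order.join x y = \top%O].

Definition classical_obj d (L : tbLatticeType d) (lim : set L -> L) : Prop :=
  forall F G : set L, lat_filter F -> lat_filter G ->
    F `&` @complemented d L = G `&` @complemented d L -> lim F = lim G.

Definition cl_lim_obj (Obj : forall d, tbLatticeType d -> Prop) d
    (L : tbLatticeType d) (lim : set L -> L) : Prop :=
  lim_obj Obj lim /\ classical_obj lim.

Definition conv_space (X : Type) (conv : set (set X) -> X -> Prop) : Prop :=
  (forall x : X, conv [set S : set X | S x] x) /\
  (forall (F G : set (set X)) (x : X), lat_filter F -> lat_filter G ->
      F `<=` G -> conv F x -> conv G x).

Definition limit_space (X : Type) (conv : set (set X) -> X -> Prop) : Prop :=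
  conv_space conv /\
  (forall (F G : set (set X)) (x : X), lat_filter F -> lat_filter G ->
      conv F x -> conv G x -> conv (F `&` G) x).

Definition Plim (X : Type) (conv : set (set X) -> X -> Prop) :
  set (set X) -> set X := fun F => [set x | conv F x].

(* the two-element object {emptyset, {*}} = set unit with constant limit {*} *)
Definition two_lim : set (set unit) -> set unit := fun _ => setT.

Definition pt (Icl Jcl : Type -> Prop) d (L : tbLatticeType d)
    (lim : set L -> L) : Type :=
  {psi : L -> set unit | conv_mor Icl Jcl lim two_lim psi}.

Definition bullet (Icl Jcl : Type -> Prop) d (L : tbLatticeType d)
    (lim : set L -> L) (l : L) : set (pt Icl Jcl lim) :=
  [set psi | proj1_sig psi l = setT].

Definition pt_conv (Icl Jcl : Type -> Prop) d (L : tbLatticeType d)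
    (lim : set L -> L) (F : set (set (pt Icl Jcl lim))) (psi : pt Icl Jcl lim)
  : Prop :=
  @bullet Icl Jcl d L lim (lim [set l | F (@bullet Icl Jcl d L lim l)]) psi.

From HB Require Import structures.
From mathcomp Require Import all_boot all_order.
From mathcomp Require Import boolp classical_sets.
Set Implicit Arguments. Unset Strict Implicit. Unset Printing Implicit Defensive.
Import Order.LTheory.
Local Open Scope classical_set_scope.

(* For P(X), limits of intersections are intersections of limits exactly
   when X is a limit space, and every element of a powerset is complemented,
   so P(X) is automatically classical.  For pt L, points are lattice morphisms into
   {emptyset, {*}} by admissibility, so l |-> l^bullet preserves top and
   binary meets; hence {l | l^bullet in F} is a filter, it commutes with
   intersections of filters, and the meet axiom of lim_L transfers to the
   convergence of points. *)

Lemma lat_filterT d (L : tbLatticeType d) (F : set L) : lat_filter F -> F \top%O.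
Proof. by move=> [[x Fx] [upF _]]; apply: (upF x); rewrite ?lex1. Qed.

Lemma lat_filterI d (L : tbLatticeType d) (F G : set L) :
  lat_filter F -> lat_filter G -> lat_filter (F `&` G).
Proof.
move=> hF hG; have FT := lat_filterT hF; have GT := lat_filterT hG.
case: hF => _ [upF meetF]; case: hG => _ [upG meetG].
split; first by exists \top%O.
split=> [x y [Fx Gx] le_xy | x y [Fx Gx] [Fy Gy]]; split.
- exact: upF Fx le_xy.
- exact: upG Gx le_xy.
- exact: meetF.
- exact: meetG.
Qed.

Lemma setI_eqT (T : Type) (A B : set T) :
  (A `&` B = setT) <-> (A = setT /\ B = setT).
Proof. by rewrite -!subTset subsetI. Qed.

Lemma complemented_powerset (X : Type) : complemented (L := set X) = setT.
Proof.
apply/seteqP; split=> // S _.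
by exists (~` S); rewrite meetEset joinEset setICr setUCr.
Qed.

Lemma classical_powerset (X : Type) (lim : set (set X) -> set X) :
  classical_obj lim.
Proof. by move=> F G _ _; rewrite complemented_powerset !setIT => ->. Qed.

Section PowersetObject.
Variables (X : Type) (conv : set (set X) -> X -> Prop).

Lemma Plim_conv_obj (Obj : forall d, tbLatticeType d -> Prop) :
  Obj set_display (set X) -> conv_space conv -> conv_obj Obj (Plim conv).
Proof.
move=> ObjX [_ conv_up]; split=> // F G fF fG FG.
by rewrite subsetEset => x; exact: conv_up.
Qed.

Lemma PlimI (F G : set (set X)) : limit_space conv -> lat_filter F -> lat_filter G ->
  Plim conv (F `&` G) = Order.meet (Plim conv F) (Plim conv G).
Proof.
move=> [[_ conv_up] convI] fF fG; rewrite meetEset.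
have fFG := lat_filterI fF fG.
apply/seteqP; split=> [x FGx | x [Fx Gx]]; last exact: convI.
by split; apply: conv_up FGx => // S [].
Qed.

Lemma Plim_lim_obj (Obj : forall d, tbLatticeType d -> Prop) :
  Obj set_display (set X) -> limit_space conv -> lim_obj Obj (Plim conv).
Proof.
move=> ObjX limX; split; first exact: Plim_conv_obj (proj1 limX).
by move=> F G; exact: PlimI.
Qed.

End PowersetObject.

Section Points.
Variables (Obj : forall d, tbLatticeType d -> Prop) (Icl Jcl : Type -> Prop).
Variables (d : Order.disp_t) (L : tbLatticeType d) (lim : set L -> L).

Local Notation pt := (pt Icl Jcl lim).
Local Notation bullet := (@bullet Icl Jcl d L lim).

Lemma pt_lattice_mor (psi : pt) :
  admissible Obj Icl Jcl -> Obj L -> lattice_mor (proj1_sig psi).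
Proof.
case: psi => psi [psiC _] [ObjP adm_mor] ObjL /=.
exact: adm_mor (ObjP unit) psiC.
Qed.

Lemma bullet_le (x y : L) : (x <= y)%O -> bullet x `<=` bullet y.
Proof.
move=> le_xy psi; rewrite /bullet /= -!subTset => psixT.
case: (proj2_sig psi) => -[psi_mono _] _.
by apply: subset_trans psixT _; rewrite -subsetEset; exact: psi_mono.
Qed.

Hypotheses (adm : admissible Obj Icl Jcl) (ObjL : Obj L).

Lemma bulletT : bullet \top%O = setT.
Proof.
apply/seteqP; split=> // psi _.
by case: (pt_lattice_mor psi adm ObjL) => _ [_ []].
Qed.

Lemma bulletI (x y : L) : bullet (Order.meet x y) = bullet x `&` bullet y.
Proof.
apply/seteqP; split=> psi; rewrite /bullet /=;
  case: (pt_lattice_mor psi adm ObjL) => -> _; rewrite meetEset;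
  by move/setI_eqT.
Qed.

Lemma lat_filter_preimage_bullet (F : set (set pt)) :
  lat_filter F -> lat_filter (bullet @^-1` F).
Proof.
move=> fF; have FT := lat_filterT fF; case: fF => _ [upF meetF].
split; first by exists \top%O; rewrite /preimage /= bulletT.
split=> [x y Fx le_xy | x y Fx Fy]; rewrite /preimage /=.
- by apply: upF Fx _; rewrite subsetEset; exact: bullet_le.
- by rewrite bulletI; exact: meetF.
Qed.

Lemma pt_conv_space : conv_obj Obj lim -> conv_space (@pt_conv Icl Jcl d L lim).
Proof.
move=> [_ lim_mono]; split.
  (* the point filter of psi pulls back to psi^{-1}{setT}, and lim_2 = setT *)
  case=> psi [psiC psi_conv]; rewrite /pt_conv /bullet /=.
  have fT : lat_filter [set S : set unit | S = setT].
    split; first by exists setT.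
    split=> [S S' -> | S S' -> ->]; last by rewrite meetEset setIT.
    by rewrite subsetEset subTset.
  by apply/eqP; rewrite eq_le; apply/andP; split;
    [rewrite subsetEset | exact: psi_conv fT].
move=> F G psi fF fG FG; rewrite /pt_conv; apply: bullet_le.
apply: lim_mono; try exact: lat_filter_preimage_bullet.
by move=> l; exact: FG.
Qed.

Lemma pt_limit_space : lim_obj Obj lim -> limit_space (@pt_conv Icl Jcl d L lim).
Proof.
move=> [limC limI]; split; first exact: pt_conv_space.
move=> F G psi fF fG; rewrite /pt_conv => Fpsi Gpsi.
change (bullet (lim (bullet @^-1` (F `&` G))) psi).
rewrite preimage_setI limI; try exact: lat_filter_preimage_bullet.
by rewrite bulletI.
Qed.

End Points.

Theorem mainTheorem6 :
  forall (Obj : forall d, Order.TBLattice.type d -> Prop) (Icl Jcl : Type -> Prop),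
    admissible Obj Icl Jcl ->
    (* restriction to Lim and (C^lim)^op *)
    ((forall (X : Type) (conv : set (set X) -> X -> Prop),
        limit_space conv -> lim_obj Obj (Plim conv)) /\
     (forall d (L : Order.TBLattice.type d) (lim : set L -> L),
        lim_obj Obj lim -> limit_space (@pt_conv Icl Jcl d L lim))) /\
    (* restriction to Lim and (C^lim_cl)^op *)
    ((forall (X : Type) (conv : set (set X) -> X -> Prop),
        limit_space conv -> cl_lim_obj Obj (Plim conv)) /\
     (forall d (L : Order.TBLattice.type d) (lim : set L -> L),
        cl_lim_obj Obj lim -> limit_space (@pt_conv Icl Jcl d L lim))).
Proof.
move=> Obj Icl Jcl adm.
have P_lim X conv : limit_space conv -> lim_obj Obj (@Plim X conv).
  exact: Plim_lim_obj (proj1 adm X).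
have pt_lim d L lim : lim_obj Obj lim -> limit_space (@pt_conv Icl Jcl d L lim).
  by move=> limL; have [[ObjL _] _] := limL; exact: pt_limit_space adm ObjL limL.
split; split=> //.
- by move=> X conv limX; split; [exact: P_lim | exact: classical_powerset].
- by move=> d L lim [limL _]; exact: pt_lim.
Qed.
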